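(* Let $X_1,X_2$ be independent real-valued random variables with probability density functions $f_1,f_2$, let $\phi\ge0$ be a weight function on $\mathbb{R}$, and set $X=X_1+X_2$. Define \[ \kappa=\exp\Big(\frac{2h^{\rm w}_\phi(X_1)}{\mathbb{E}\phi(X_1)}\Big)+\exp\Big(\frac{2h^{\rm w}_\phi(X_2)}{\mathbb{E}\phi(X_2)}\Big),\qquad \alpha=\tan^{-1}\Big[\exp\Big(\frac{h^{\rm w}_\phi(X_2)}{\mathbb{E}\phi(X_2)}-\frac{h^{\rm w}_\phi(X_1)}{\mathbb{E}\phi(X_1)}\Big)\Big], \] $Y_1=X_1/\cos\alpha$, $Y_2=X_2/\sin\alpha$, $\phi_c(x)=\phi(x\cos\alpha)$, $\phi_s(x)=\phi(x\sin\alpha)$, and $h^{\rm w}_{\phi_c}(Y_1)=-\mathbb{E}[\phi_c(Y_1)\log f_{Y_1}(Y_1)]$, $h^{\rm w}_{\phi_s}(Y_2)=-\mathbb{E}[\phi_s(Y_2)\log f_{Y_2}(Y_2)]$, where $f_{Y_i}$ is the density of $Y_i$. Assume: (i) if $\kappa\ge1$ then $\mathbb{E}\phi(X_i)\ge\mathbb{E}\phi(X)$ for $i=1,2$, and if $\kappa\le1$ then $\mathbb{E}\phi(X_i)\le\mathbb{E}\phi(X)$ for $i=1,2$; (ii) (weighted Lieb splitting inequality) $(\cos\alpha)^2h^{\rm w}_{\phi_c}(Y_1)+(\sin\alpha)^2h^{\rm w}_{\phi_s}(Y_2)\le h^{\rm w}_\phi(X)$. Then the weighted entropy power inequality holds: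 \[ \exp\Big(\frac{2h^{\rm w}_\phi(X_1)}{\mathbb{E}\phi(X_1)}\Big)+\exp\Big(\frac{2h^{\rm w}_\phi(X_2)}{\mathbb{E}\phi(X_2)}\Big)\le\exp\Big(\frac{2h^{\rm w}_\phi(X)}{\mathbb{E}\phi(X)}\Big). \]
   Context: For a real random variable $Z$ with density $f_Z$ and a nonnegative weight function $\phi$, the weighted differential entropy is $h^{\rm w}_\phi(Z)=-\mathbb{E}[\phi(Z)\log f_Z(Z)]=-\int\phi(x)f_Z(x)\log f_Z(x)\,dx$; $\log$ is the natural logarithm. All integrals are assumed to converge absolutely, and $\phi>0$ on an open set. *)

From mathcomp Require Import all_boot all_order all_algebra.
From mathcomp Require Import all_classical all_reals all_analysis.
Set Implicit Arguments. Unset Strict Implicit. Unset Printing Implicit Defensive.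
Import Order.TTheory GRing.Theory Num.Theory.
Import numFieldNormedType.Exports.
Local Open Scope classical_set_scope.
Local Open Scope ring_scope.

Definition indep2 {d} {T : measurableType d} {R : realType}
  (P : probability T R) (X1 X2 : T -> R) : Prop :=
  forall A B : set R, measurable A -> measurable B ->
    P (X1 @^-1` A `&` X2 @^-1` B) = (P (X1 @^-1` A) * P (X2 @^-1` B))%E.

Definition is_density {d} {T : measurableType d} {R : realType}
  (P : probability T R) (Z : T -> R) (f : R -> R) : Prop :=
  measurable_fun setT f /\ (forall x, 0 <= f x) /\
  forall A : set R, measurable A ->
    P (Z @^-1` A) = (\int[lebesgue_measure]_(x in A) (f x)%:E)%E.

Definition wexp {d} {T : measurableType d} {R : realType}
  (P : probability T R) (phi : R -> R) (Z : T -> R) : R :=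
  fine 'E_P[phi \o Z].

Definition went {d} {T : measurableType d} {R : realType}
  (P : probability T R) (phi : R -> R) (Z : T -> R) (f : R -> R) : R :=
  - fine 'E_P[fun w => phi (Z w) * ln (f (Z w))].

Definition wadmissible {d} {T : measurableType d} {R : realType}
  (P : probability T R) (phi : R -> R) (Z : T -> R) (f : R -> R) : Prop :=
  P.-integrable setT (EFin \o (phi \o Z)) /\
  P.-integrable setT (EFin \o (fun w => phi (Z w) * ln (f (Z w)))).

(* Dilation shifts weighted entropy linearly: the density of Z / c is y |-> c f_Z(y c),
   so h^w_{phi(. c)}(Z / c) = h^w_phi(Z) - E phi(Z) ln c.  Write a_i = h^w_phi(X_i) / E phi(X_i).
   The angle alpha satisfies tan alpha = e^(a2 - a1), i.e. sigma := a1 - ln cos alpha equals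
   a2 - ln sin alpha; hence kappa = e^(2 sigma) (cos^2 alpha + sin^2 alpha) = e^(2 sigma), and
   the splitting inequality (ii) reads
   sigma (cos^2 alpha E phi(X1) + sin^2 alpha E phi(X2)) <= h^w_phi(X).
   Hypothesis (i) places E phi(X) on the side of this convex combination given by the sign of
   sigma, so sigma E phi(X) <= h^w_phi(X), which is the claim. *)

From mathcomp Require Import all_boot all_order all_algebra.
From mathcomp Require Import all_classical all_reals all_analysis.
From mathcomp Require Import measurable_realfun ring lra.
Set Implicit Arguments.
Unset Strict Implicit.
Unset Printing Implicit Defensive.
Import Order.TTheory GRing.Theory Num.Theory.
Import numFieldNormedType.Exports.
Local Open Scope classical_set_scope.
Local Open Scope ring_scope.

Section lebesgue_dilation.
Context {R : realType}.
Local Notation mu := (@lebesgue_measure R).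

(* Typed on the domain of [lebesgue_measure], so that pushing it forward along the
   dilation gives a measure on the same space. *)
Let dilation (c : R) : measurableTypeR R -> measurableTypeR R := fun x => x * c.

Let measurable_dilation (c : R) : measurable_fun setT (dilation c).
Proof. exact: mulrr_measurable. Qed.

Lemma lebesgue_measure_preimage_mulr (c : R) (A : set R) : 0 < c ->
  measurable A -> mu A = (c%:E * mu ((fun x => x * c)%R @^-1` A))%E.
Proof.
move=> c_gt0 mA.
pose dilated := measure_function_pushforward__canonical__measure_function_Measure
  mu (measurable_dilation c).
apply: (@lebesgue_measure_unique R (mscale (NngNum (ltW c_gt0)) dilated) _ _ mA).
move=> _ /ocitvP[->|[[a b] /= ab ->]]; first by rewrite !measure0.
rewrite /mscale/= /pushforward.
have -> : dilation c @^-1` `]a, b]%classic = `]a / c, b / c]%classic.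
  by apply/seteqP; split => x /=; rewrite !in_itv/= ltr_pdivrMr// ler_pdivlMr.
rewrite !lebesgue_measure_itv/= !lte_fin ab ltr_pM2r ?invr_gt0// ab.
by rewrite -EFinM -!EFinB; congr (_%:E); field; rewrite gt_eqF.
Qed.

Lemma ge0_integral_mulr (c : R) (f : R -> \bar R) (E : set R) : 0 < c ->
  measurable E -> measurable_fun setT f -> (forall x, 0 <= f x)%E ->
  (\int[mu]_(x in (fun x => x * c)%R @^-1` E) f (x * c)%R =
   (c^-1)%:E * \int[mu]_(y in E) f y)%E.
Proof.
move=> c_gt0 mE mf f_ge0.
rewrite -(ge0_integral_pushforward (measurable_dilation c))//; last exact: measurable_funS mf.
have cV_ge0 : 0 <= c^-1 by rewrite invr_ge0 ltW.
rewrite -(ge0_integral_mscale mu _ (NngNum cV_ge0))//; last exact: measurable_funS mf.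
apply: eq_measure_integral => A mA _.
rewrite /pushforward/= /mscale/= (lebesgue_measure_preimage_mulr c_gt0 mA).
by rewrite muleA -EFinM mulVf ?gt_eqF// mul1e.
Qed.

End lebesgue_dilation.

Section densities.
Context d (T : measurableType d) (R : realType) (P : probability T R).
Local Notation mu := (@lebesgue_measure R).

Lemma is_density_divr (Z : T -> R) (f : R -> R) (c : R) : 0 < c ->
  is_density P Z f -> is_density P (fun w => Z w / c) (fun y => c * f (y * c)).
Proof.
move=> c_gt0 [mf [f_ge0 dZ]].
have mfc : measurable_fun setT (fun y : R => f (y * c)).
  exact: measurableT_comp mf (mulrr_measurable _).
split; first exact: measurable_funM.
split=> [y|A mA]; first exact: mulr_ge0 (ltW c_gt0) (f_ge0 _).
have cV_gt0 : 0 < c^-1 by rewrite invr_gt0.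
have -> : (fun w => Z w / c) @^-1` A = Z @^-1` ((fun x => x * c^-1) @^-1` A) by [].
rewrite dZ; last by rewrite -[X in measurable X]setTI; exact: mulrr_measurable.
under eq_integral => x _ do rewrite -[x in f x](mulfVK (lt0r_neq0 c_gt0)).
rewrite (ge0_integral_mulr (f := fun y => (f (y * c))%:E) cV_gt0 mA); last 2 first.
- exact/measurable_EFinP.
- by move=> y; rewrite lee_fin.
under [RHS]eq_integral => y _ do rewrite EFinM.
rewrite ge0_integralZl_EFin ?invrK ?ltW//.
- by move=> y _; rewrite lee_fin.
- exact/measurable_EFinP/measurable_funTS.
Qed.

Lemma is_density_ae_eq (Z : T -> R) (f g : R -> R) :
  is_density P Z f -> is_density P Z g -> {ae mu, forall x, f x = g x}.
Proof.
move=> [mf [f_ge0 dZf]] [mg [_ dZg]].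
have f_int : mu.-integrable setT (EFin \o f).
  apply/integrableP; split; first exact/measurable_EFinP.
  under eq_integral => x _ do rewrite gee0_abs ?lee_fin//.
  by rewrite -dZf// preimage_setT probability_setT ltry.
have := integral_ae_eq measurableT f_int (proj2 (measurable_EFinP _ _) mg).
move=> /(_ (fun E _ mE => etrans (esym (dZf E mE)) (dZg E mE))).
by apply: filterS => x /(_ I) [].
Qed.

Lemma is_density_ae (Z : T -> R) (f : R -> R) (Q : R -> Prop) :
  measurable_fun setT Z -> is_density P Z f ->
  {ae mu, forall x, Q x} -> {ae P, forall w, Q (Z w)}.
Proof.
move=> mZ [mf [_ dZ]] [N [mN N0 QN]]; exists (Z @^-1` N); split.
- by rewrite -[X in measurable X]setTI; exact: mZ.
- by rewrite dZ// null_set_integral//; exact/measurable_EFinP/measurable_funTS.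
- by move=> w; apply: QN.
Qed.

Lemma is_density_ae_gt0 (Z : T -> R) (f : R -> R) :
  measurable_fun setT Z -> is_density P Z f -> {ae P, forall w, 0 < f (Z w)}.
Proof.
move=> mZ [mf [f_ge0 dZ]].
have mf0 : measurable (f @^-1` [set 0]).
  by rewrite -[X in measurable X]setTI; exact: mf.
exists (Z @^-1` (f @^-1` [set 0])); split.
- by rewrite -[X in measurable X]setTI; exact: mZ.
- rewrite dZ//.
  by rewrite (eq_integral (fun _ => 0%E)) ?integral0// => x /[!inE] /= ->.
- by move=> w /= /negP; rewrite lt_def f_ge0 andbT negbK => /eqP.
Qed.

Lemma expectation_ae_eq (X Y : T -> R) :
  measurable_fun setT X -> measurable_fun setT Y ->
  {ae P, forall w, X w = Y w} -> ('E_P[X] = 'E_P[Y])%E.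
Proof.
move=> mX mY XY; rewrite unlock; apply: ae_eq_integral => //.
- exact/measurable_EFinP.
- exact/measurable_EFinP.
- by apply: filterS XY => w ->.
Qed.

Lemma went_divr (phi : R -> R) (Z : T -> R) (fZ g : R -> R) (c : R) : 0 < c ->
  measurable_fun setT Z -> is_density P Z fZ -> is_density P (fun w => Z w / c) g ->
  wadmissible P phi Z fZ ->
  wadmissible P (fun x => phi (x * c)) (fun w => Z w / c) g ->
  went P (fun x => phi (x * c)) (fun w => Z w / c) g =
  went P phi Z fZ - wexp P phi Z * ln c.
Proof.
move=> c_gt0 mZ dZ dW [phiZ_int logZ_int] [_ logW_int].
have mW : measurable_fun setT (fun w => Z w / c).
  exact: measurable_funM mZ (measurable_cst _).
have gW := is_density_ae mW dW (is_density_ae_eq dW (is_density_divr c_gt0 dZ)).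
have fZ_gt0 := is_density_ae_gt0 mZ dZ.
have logW_split :
  ('E_P[(fun w => phi (Z w / c * c) * ln (g (Z w / c)))%R] =
   'E_P[(ln c \o* (phi \o Z) \+ (fun w => phi (Z w) * ln (fZ (Z w))))%R])%E.
  apply: expectation_ae_eq.
  - exact/measurable_EFinP/(measurable_int _ logW_int).
  - apply: measurable_funD; last exact/measurable_EFinP/(measurable_int _ logZ_int).
    apply: measurable_funM; last exact: measurable_cst.
    exact/measurable_EFinP/(measurable_int _ phiZ_int).
  - move: gW fZ_gt0; apply: filterS2 => w -> fZw_gt0 /=.
    by rewrite divfK ?lt0r_neq0// lnM ?posrE//=; ring.
have phiZ_L : phi \o Z \in Lfun P 1 by exact/Lfun1_integrable.
have logZ_L : (fun w => phi (Z w) * ln (fZ (Z w))) \in Lfun P 1.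
  exact/Lfun1_integrable.
rewrite /went /wexp logW_split expectationD ?expectationZl ?Lfun_scale//.
rewrite fineD ?fineM ?fin_numM ?expectation_fin_num//.
by rewrite /=; ring.
Qed.

End densities.

Section atan_expR.
Context {R : realType}.

Lemma cos_atan_gt0 (x : R) : 0 < cos (atan x).
Proof. by apply: cos_gt0_pihalf; rewrite atan_gtNpi2 atan_ltpi2. Qed.

Lemma sin_atan (x : R) : sin (atan x) = x * cos (atan x).
Proof. by rewrite -{2}(atanK x) /tan divfK ?lt0r_neq0 ?cos_atan_gt0. Qed.

Lemma ln_sin_atan (x : R) : 0 < x -> ln (sin (atan x)) = ln x + ln (cos (atan x)).
Proof. by move=> x_gt0; rewrite sin_atan lnM ?posrE ?cos_atan_gt0. Qed.

Lemma expR2D_ln_cos_sin (a c s : R) : 0 < c -> 0 < s -> c ^+ 2 + s ^+ 2 = 1 ->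
  expR (2 * (a + ln c)) + expR (2 * (a + ln s)) = expR (2 * a).
Proof.
move=> c_gt0 s_gt0 cs1.
by rewrite !mulrDr !expRD !expRM_natl !lnK ?posrE// -mulrDr cs1 mulr1.
Qed.

Lemma ler_mul_weighted_mean (c s a E1 E2 E h : R) : c ^+ 2 + s ^+ 2 = 1 ->
  (0 <= a -> E <= E1 /\ E <= E2) -> (a <= 0 -> E1 <= E /\ E2 <= E) ->
  a * (c ^+ 2 * E1 + s ^+ 2 * E2) <= h -> a * E <= h.
Proof.
move=> cs1 E_le E_ge; apply: le_trans.
rewrite -[in leLHS](mul1r E) -cs1 mulrDl.
have [a_ge0|a_le0] := leP 0 a.
- have [E_le1 E_le2] := E_le a_ge0.
  by rewrite ler_wpM2l// lerD// ler_wpM2l ?sqr_ge0.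
- have [E_ge1 E_ge2] := E_ge (ltW a_le0).
  apply: ler_wnM2l; first exact: ltW.
  by rewrite lerD// ler_wpM2l ?sqr_ge0.
Qed.

End atan_expR.

Theorem mainTheorem2 (R : realType) (d : measure_display) (T : measurableType d)
  (P : probability T R) (X1 X2 : T -> R) (f1 f2 f fY1 fY2 phi : R -> R) :
  measurable_fun setT X1 -> measurable_fun setT X2 ->
  indep2 P X1 X2 ->
  is_density P X1 f1 -> is_density P X2 f2 ->
  measurable_fun setT phi -> (forall x, 0 <= phi x) ->
  (exists U : set R, open U /\ U !=set0 /\ forall x, U x -> 0 < phi x) ->
  let X := fun w => X1 w + X2 w in
  is_density P X f ->
  let kappa := expR (2 * went P phi X1 f1 / wexp P phi X1)
             + expR (2 * went P phi X2 f2 / wexp P phi X2) in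
  let alpha := atan (expR (went P phi X2 f2 / wexp P phi X2
                           - went P phi X1 f1 / wexp P phi X1)) in
  let Y1 := fun w => X1 w / cos alpha in
  let Y2 := fun w => X2 w / sin alpha in
  let phic := fun x => phi (x * cos alpha) in
  let phis := fun x => phi (x * sin alpha) in
  is_density P Y1 fY1 -> is_density P Y2 fY2 ->
  wadmissible P phi X1 f1 -> wadmissible P phi X2 f2 -> wadmissible P phi X f ->
  wadmissible P phic Y1 fY1 -> wadmissible P phis Y2 fY2 ->
  0 < wexp P phi X1 -> 0 < wexp P phi X2 -> 0 < wexp P phi X ->
  (* (i) *)
  (1 <= kappa -> wexp P phi X <= wexp P phi X1 /\ wexp P phi X <= wexp P phi X2) ->
  (kappa <= 1 -> wexp P phi X1 <= wexp P phi X /\ wexp P phi X2 <= wexp P phi X) ->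
  (* (ii) weighted Lieb splitting inequality *)
  (cos alpha) ^+ 2 * went P phic Y1 fY1 + (sin alpha) ^+ 2 * went P phis Y2 fY2
    <= went P phi X f ->
  kappa <= expR (2 * went P phi X f / wexp P phi X).
Proof.
(* Independence, the density of X and the conditions on phi only serve to establish (ii). *)
move=> mX1 mX2 _ d1 d2 _ _ _ X _ kappa alpha Y1 Y2 phic phis dY1 dY2
  adm1 adm2 _ admc adms E1_gt0 E2_gt0 E_gt0 kappa_ge1 kappa_le1 lieb.
set c := cos alpha; set s := sin alpha.
have c_gt0 : 0 < c := cos_atan_gt0 _.
have s_gt0 : 0 < s by rewrite /s sin_atan mulr_gt0 ?expR_gt0 ?cos_atan_gt0.
rewrite (went_divr c_gt0 mX1 d1 dY1 adm1 admc) in lieb.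
rewrite (went_divr s_gt0 mX2 d2 dY2 adm2 adms) in lieb.
set sigma := went P phi X1 f1 / wexp P phi X1 - ln c.
have a1E : went P phi X1 f1 / wexp P phi X1 = sigma + ln c by rewrite subrK.
have a2E : went P phi X2 f2 / wexp P phi X2 = sigma + ln s.
  by rewrite /s ln_sin_atan ?expR_gt0// expRK /sigma; ring.
have kappaE : kappa = expR (2 * sigma).
  by rewrite /kappa -!mulrA a1E a2E expR2D_ln_cos_sin// cos2Dsin2.
rewrite -(divfK (lt0r_neq0 E1_gt0) (went P phi X1 f1)) a1E in lieb.
rewrite -(divfK (lt0r_neq0 E2_gt0) (went P phi X2 f2)) a2E in lieb.
rewrite kappaE ler_expR -mulrA ler_pM2l// ler_pdivlMr//.
apply: (ler_mul_weighted_mean (cos2Dsin2 alpha)).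
- by move=> sigma_ge0; apply: kappa_ge1; rewrite kappaE -expR0 ler_expR mulr_ge0.
- by move=> sigma_le0; apply: kappa_le1; rewrite kappaE expR_le1 pmulr_rle0.
- lra.
Qed.
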